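(* Let $m\ge3$ be an integer and let $n$ be a positive divisor of $\frac{3^m-1}{2}$ with $n>\frac{3^{\lfloor m/2\rfloor}+1}{2}$. Let $\beta$ be a primitive $2n$-th root of unity in an extension field of $\mathrm{GF}(3)$, and for $i$ let $\mathbb{M}_{\beta^i}(x)$ be the minimal polynomial of $\beta^i$ over $\mathrm{GF}(3)$. Then $\mathrm{ord}_{2n}(3)=m$ and $\mathrm{lcm}(\mathbb{M}_\beta(x),\mathbb{M}_{\beta^{2n-1}}(x))=\mathbb{M}_\beta(x)\mathbb{M}_{\beta^{2n-1}}(x)$.
   Context: $\mathrm{ord}_M(3)$ is the multiplicative order of $3$ modulo $M$; lcm is the least common multiple of polynomials. *)

From HB Require Import structures.
From mathcomp Require Import all_boot all_order all_algebra all_field.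
Set Implicit Arguments. Unset Strict Implicit. Unset Printing Implicit Defensive.
Import GRing.Theory.
Local Open Scope ring_scope.

Definition is_mult_order (M a k : nat) : Prop :=
  (0 < k)%N /\ (a ^ k = 1 %[mod M])%N /\
  (forall j : nat, (0 < j)%N -> (a ^ j = 1 %[mod M])%N -> (k <= j)%N).

Definition is_lcmp (R : fieldType) (p q l : {poly R}) : Prop :=
  l \is monic /\ p %| l /\ q %| l /\
  (forall r : {poly R}, p %| r -> q %| r -> l %| r).

From HB Require Import structures.
From mathcomp Require Import all_boot all_order all_algebra all_field.
From mathcomp Require Import zify.
Set Implicit Arguments. Unset Strict Implicit. Unset Printing Implicit Defensive.
Import GRing.Theory.

(* Let h = m./2.  The hypothesis on n says 2n > 3^h + 1, and 2n divides 3^m - 1.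
   The order of 3 modulo 2n divides m; a proper divisor d of m is at most h,
   and 3^d = 1 (mod 2n) would give 2n < 3^d <= 3^h, so the order is m.
   The minimal polynomials of beta and beta^(2n-1) = beta^-1 are irreducible,
   so if they were not coprime they would coincide, making beta a root of the
   conjugate polynomial prod_(i<m) (X - beta^(-3^i)), i.e. 2n | 3^i + 1 for
   some i < m.  Then 3^(2i) = 1 (mod 2n), so m | 2i: either i = 0 or 2i = m,
   and in both cases 2n <= 3^h + 1.  Coprime monic polynomials have their
   product as least common multiple. *)

Lemma is_mult_order_dvdn N a k j :
  is_mult_order N a k -> a ^ j = 1 %[mod N] -> k %| j.
Proof.
move=> [k_gt0 [akE k_min]] ajE.
have arE : a ^ (j %% k) = 1 %[mod N].
  rewrite -ajE [in RHS](divn_eq j k) expnD [_ %/ _ * _]mulnC expnM.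
  by rewrite -modnMml -(modnXm _ N (a ^ k)) akE modnXm exp1n modnMml mul1n.
apply/eqP; case: (posnP (j %% k)) => [// | r_gt0].
by have := k_min _ r_gt0 arE; rewrite leqNgt ltn_pmod.
Qed.

Lemma is_mult_order_exists N a j :
  0 < j -> a ^ j = 1 %[mod N] -> exists k, is_mult_order N a k.
Proof.
move=> j_gt0 ajE.
have exP : exists k, (0 < k) && (a ^ k == 1 %[mod N]).
  by exists j; rewrite j_gt0 ajE eqxx.
have [k /andP[k_gt0 /eqP akE] k_min] := ex_minnP exP.
exists k; split=> //; split=> // i i_gt0 aiE.
by apply: k_min; rewrite i_gt0 aiE eqxx.
Qed.

Lemma modn_eq1_lt N b : 1 < b -> b = 1 %[mod N] -> N < b.
Proof.
move=> b_gt1 /eqP; rewrite eqn_mod_dvd ?(ltnW b_gt1) // => /dvdn_leq.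
by rewrite subn_gt0 => /(_ b_gt1); rewrite leq_subRL ?(ltnW b_gt1) // add1n.
Qed.

Lemma dvdn_lt_leq_half d m : d %| m -> d < m -> d <= m./2.
Proof.
case/dvdnP=> k ->; rewrite geq_half_double -muln2.
case: k => [|[|k]]; rewrite ?mul0n ?mul1n ?ltnn // => _.
by rewrite [_ * d]mulnC leq_mul2l; apply/orP; right.
Qed.

Lemma is_mult_order_large_modulus N a m :
  1 < a -> 0 < m -> a ^ m = 1 %[mod N] -> a ^ m./2 <= N -> is_mult_order N a m.
Proof.
move=> a_gt1 m_gt0 amE N_ge.
have [k ordk] := is_mult_order_exists m_gt0 amE.
suff <- : k = m by [].
have [k_gt0 [akE k_min]] := ordk.
apply/eqP; rewrite eqn_leq k_min //= leqNgt; apply/negP => k_lt_m.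
have k_le : k <= m./2 := dvdn_lt_leq_half (is_mult_order_dvdn ordk amE) k_lt_m.
have : N < a ^ k by apply: modn_eq1_lt akE; rewrite -{1}(expn0 a) ltn_exp2l.
by rewrite ltnNge (leq_trans _ N_ge) // leq_pexp2l // ltnW.
Qed.

Lemma dvdn_exp_add1_leq N a m i :
  0 < a -> is_mult_order N a m -> N %| a ^ i + 1 -> i < m -> N <= a ^ m./2 + 1.
Proof.
move=> a_gt0 ordm Ndvd i_lt_m.
have N_le : N <= a ^ i + 1 by apply: dvdn_leq Ndvd; rewrite addn1.
have [i0 | i_gt0] := posnP i.
  by apply: leq_trans N_le _; rewrite i0 leq_add2r expn_gt0 a_gt0.
have a2iE : a ^ (i * 2) = 1 %[mod N].
  apply/eqP; rewrite eqn_mod_dvd ?expn_gt0 ?a_gt0 //.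
  have -> : a ^ (i * 2) - 1 = (a ^ i + 1) * (a ^ i - 1).
    have : 0 < a ^ i by rewrite expn_gt0 a_gt0.
    rewrite expnM; move: (a ^ i) => b b_gt0; nia.
  exact: dvdn_mulr.
have /dvdnP[k i2E] := is_mult_order_dvdn ordm a2iE.
suff -> : m./2 = i by [].
have k1 : k = 1 by move: i_gt0 i_lt_m i2E; clear; nia.
by move: i2E; rewrite k1 mul1n => <-; rewrite muln2 half_double.
Qed.

Local Open Scope ring_scope.

Lemma is_lcmp_mul_coprime (R : fieldType) (p q : {poly R}) :
  p \is monic -> q \is monic -> coprimep p q -> is_lcmp p q (p * q).
Proof.
move=> p_monic q_monic pq_coprime; split; first by rewrite rpredM.
split; first exact: dvdp_mulIl.
split; first exact: dvdp_mulIr.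
by move=> r pr qr; rewrite Gauss_dvdp // pr qr.
Qed.

Lemma coprimep_minPoly (F : fieldType) (L : fieldExtType F) (K : {subfield L})
    (x y : L) :
  ~~ root (minPoly K y) x -> coprimep (minPoly K x) (minPoly K y).
Proof.
apply: contraR; rewrite -gcdp_eqp1 => not_coprime.
have gcdK := gcdp_polyOver (minPolyOver K x) (minPolyOver K y).
have := minPoly_irr gcdK (dvdp_gcdl (minPoly K x) (minPoly K y)).
rewrite (negPf not_coprime) orbF => gcd_eqp.
have xy_dvd : minPoly K x %| minPoly K y by rewrite -(eqp_dvdl _ gcd_eqp) dvdp_gcdr.
exact: root_dvdp xy_dvd (root_minPoly K x).
Qed.

Section PrimeFieldExtension.

Variables (p : nat) (L : fieldExtType 'F_p).
Hypothesis p_pr : prime p.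

Lemma Frobenius_fixed_memv1 (c : L) : c ^+ p = c -> c \in 1%VS.
Proof.
by move=> cpE; rewrite (Fermat's_little_theorem 1%AS) dimv1 expn1 card_Fp // cpE.
Qed.

Definition frobenius_orbit (x : L) (m : nat) := [seq x ^+ (p ^ i) | i <- iota 0 m].

Let pcharL : p \in [pchar L].
Proof. by rewrite (pchar_lalg L) pchar_Fp. Qed.

Lemma map_frobenius_orbit (x : L) (m : nat) : x ^+ (p ^ m) = x ->
  map (pFrobenius_aut pcharL) (frobenius_orbit x m) = rot 1 (frobenius_orbit x m).
Proof.
case: m => [// | k] xE.
have frobE : pFrobenius_aut pcharL \o (fun i => x ^+ (p ^ i))
              =1 (fun i => x ^+ (p ^ i)) \o addn 1.
  by move=> i /=; rewrite pFrobenius_autE -exprM -expnSr add1n.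
rewrite /frobenius_orbit -map_comp (eq_map frobE) map_comp -(iotaDl 1 0).
rewrite [in RHS]/= rot1_cons.
by rewrite -[k.+1]addn1 iotaD map_cat /= add1n xE expn0 expr1 cats1.
Qed.

Lemma frobenius_orbit_polyOver (x : L) (m : nat) : x ^+ (p ^ m) = x ->
  \prod_(y <- frobenius_orbit x m) ('X - y%:P) \is a polyOver 1%VS.
Proof.
move=> xE; set Q := \prod_(y <- _) _.
have frobQ : map_poly (pFrobenius_aut pcharL) Q = Q.
  rewrite map_prod_XsubC -(big_map _ xpredT (fun y => 'X - y%:P)).
  by rewrite map_frobenius_orbit //; apply: perm_big; rewrite perm_rot.
apply/polyOverP => i; apply: Frobenius_fixed_memv1.
by rewrite -pFrobenius_autE -[in RHS]frobQ coef_map.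
Qed.

Lemma root_minPoly_frobenius_orbit (x y : L) (m : nat) :
  (0 < m)%N -> x ^+ (p ^ m) = x -> root (minPoly 1 x) y ->
  exists2 i, (i < m)%N & y = x ^+ (p ^ i).
Proof.
move=> m_gt0 xE root_y.
have x_orbit : x \in frobenius_orbit x m.
  by apply/mapP; exists 0%N; rewrite ?mem_iota ?expn0 ?expr1.
have /root_dvdp/(_ root_y) :
    minPoly 1 x %| \prod_(z <- frobenius_orbit x m) ('X - z%:P).
  by apply: minPoly_dvdp; rewrite ?frobenius_orbit_polyOver ?root_prod_XsubC.
by rewrite root_prod_XsubC => /mapP[i]; rewrite mem_iota add0n; exists i.
Qed.

Lemma prim_root_minPoly_inv (N m : nat) (z : L) :
  N.-primitive_root z -> (0 < m)%N -> (p ^ m = 1 %[mod N])%N ->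
  root (minPoly 1 z^-1) z -> exists2 i, (i < m)%N & (N %| p ^ i + 1)%N.
Proof.
move=> prim m_gt0 pmE root_z.
have zE : z ^+ (p ^ m) = z.
  by rewrite -[in RHS](expr1 z); apply/eqP; rewrite (eq_prim_root_expr prim) pmE.
have zVE : z^-1 ^+ (p ^ m) = z^-1 by rewrite exprVn zE.
have [i i_lt_m zVi] := root_minPoly_frobenius_orbit m_gt0 zVE root_z.
exists i => //; rewrite (prim_order_dvd prim) addn1 exprSr {2}zVi exprVn mulfV //.
by rewrite expf_neq0 // (prim_root_eq0 prim) -lt0n (prim_order_gt0 prim).
Qed.

End PrimeFieldExtension.

Theorem lemma30 (m n : nat) (L : fieldExtType 'F_3) (beta : L) :
  (3 <= m)%N -> (0 < n)%N -> (n %| (3 ^ m - 1) %/ 2)%N ->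
  ((3 ^ m./2 + 1) %/ 2 < n)%N ->
  (2 * n).-primitive_root beta ->
  is_mult_order (2 * n) 3 m /\
  is_lcmp (minPoly 1%VS beta) (minPoly 1%VS (beta ^+ (2 * n - 1)))
          (minPoly 1%VS beta * minPoly 1%VS (beta ^+ (2 * n - 1))).
Proof.
move=> m_ge3 n_gt0 n_dvd n_gt prim.
have m_gt0 : (0 < m)%N by apply: leq_trans m_ge3.
have n2_gt : (3 ^ m./2 + 1 < 2 * n)%N by rewrite mulnC -ltn_divLR.
have expm_mod : (3 ^ m = 1 %[mod 2 * n])%N.
  have two_dvd : (2 %| 3 ^ m - 1)%N by rewrite dvdn2 oddB ?expn_gt0 // oddX orbT.
  apply/eqP; rewrite eqn_mod_dvd ?expn_gt0 //.
  by rewrite -(divnK two_dvd) mulnC dvdn_pmul2r.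
have ord_m : is_mult_order (2 * n) 3 m.
  apply: is_mult_order_large_modulus => //.
  by apply: ltnW; apply: leq_ltn_trans n2_gt; rewrite leq_addr.
split=> //; apply: is_lcmp_mul_coprime; rewrite ?monic_minPoly //.
apply: coprimep_minPoly; apply/negP.
have -> : beta ^+ (2 * n - 1) = beta^-1.
  rewrite expfB ?(prim_expr_order prim) ?expr1 ?div1r //.
  by apply: leq_ltn_trans n2_gt; rewrite leq_addl.
case/(prim_root_minPoly_inv (isT : prime 3) prim m_gt0 expm_mod) => i i_lt_m.
move/(dvdn_exp_add1_leq (isT : (0 < 3)%N) ord_m)/(_ i_lt_m).
by rewrite leqNgt n2_gt.
Qed.
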